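(* Let $k$ be a perfect field of characteristic $p>0$, $S=k[x_1,\dots,x_n]$, $I\subseteq S$ a squarefree monomial ideal and $R=S/I$ the Stanley-Reisner ring. Then the $R$-Cartier algebra $\mathcal{C}(R)$ is gauge bounded.
   Context: For $e\ge0$, $F^e_*R$ is $R$ with $R$-structure $r\cdot m=r^{p^e}m$; $\mathcal{C}_e(R)=\mathrm{Hom}_R(F^e_*R,R)$ is the set of $p^{-e}$-linear maps $\psi:R\to R$ (additive with $\psi(r^{p^e}m)=r\psi(m)$), and $\mathcal{C}(R)=\bigoplus_{e\ge0}\mathcal{C}_e(R)$ is the graded ring with multiplication by composition ($\mathcal{C}_0(R)=R$); $\mathcal{C}_+(R)=\bigoplus_{e\ge1}\mathcal{C}_e(R)$, a right $R$-module. Gauge: for $\alpha\in\mathbb{N}_0^n$ let $\|\alpha\|=\max_j\alpha_j$; let $S_d$ be the $k$-span of monomials ${\bf x}^\alpha$ with $\|\alpha\|\le d$. For a finitely generated $S$-module $M$ with generators $m_1,\dots,m_k$, set $M_d=S_d\cdot\langle m_1,\dots,m_k\rangle$ and $\delta(m)=d$ if $m\in M_d\setminus M_{d-1}$, $\delta(0)=-\infty$; the standard gauge on $R$ is the one induced by the generator $1_R$. $\mathcal{C}(R)$ is gauge bounded if for some (equivalently each) gauge $\delta$ on $R$ there is a family $\{\psi_i\in\mathcal{C}_{e_i}(R)\}$ generating $\mathcal{C}_+(R)$ as a right $R$-module and a constant $K$ with $\delta(\psi_i(r))\le \delta(r)/p^{e_i}+K/(p-1)$ for all $i$ and all $r\in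 R$. *)

From HB Require Import structures.
From mathcomp Require Import all_boot all_algebra.
From mathcomp Require Import finmap mpoly.
Set Implicit Arguments.
Unset Strict Implicit.
Unset Printing Implicit Defensive.
Import GRing.Theory.
Local Open Scope ring_scope.

(* The ring R = S/I is handled through
   representatives in S: an element of R is represented by any f : S,
   and two representatives f, g give the same element of R iff I (f - g). *)

Section StanleyReisner.
Variables (k : fieldType) (n : nat).
Local Notation S := {mpoly k[n]}.

Definition squarefree_monom (m : 'X_{1..n}) : bool := [forall i, (m i <= 1)%N].

Definition monomial_ideal (gens : seq 'X_{1..n}) (f : S) : Prop :=
  exists c : 'X_{1..n} -> S, f = \sum_(m <- gens) c m * 'X_[m].

Definition in_Sd (d : nat) (g : S) : Prop :=
  forall m, m \in msupp g -> forall j, (m j <= d)%N.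

(* M_d = S_d . 1_R  (standard gauge on R = S/I, generator 1_R):
   the class of f lies in M_d *)
Definition in_Md (I : S -> Prop) (d : nat) (f : S) : Prop :=
  exists g, in_Sd d g /\ I (f - g).

(* delta_le I f x  <->  delta(f mod I) <= x  for the standard gauge delta,
   where delta(0) = -oo and otherwise delta(f) = min { d | f in M_d }. *)
Definition delta_le (I : S -> Prop) (f : S) (x : rat) : Prop :=
  I f \/ exists d : nat, (d%:R <= x) /\ in_Md I d f.

(* psi : S -> S represents (a lift of) an element of C_e(R) =
   Hom_R(F^e_* R, R), i.e. a well-defined map R -> R which is additive
   and satisfies psi(r^(p^e) m) = r psi(m). *)
Definition cartier_map (I : S -> Prop) (p e : nat) (psi : S -> S) : Prop :=
  [/\ forall f g, I (f - g) -> I (psi f - psi g),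
      forall f g, I (psi (f + g) - (psi f + psi g)) &
      forall r m, I (psi (r ^+ (p ^ e) * m) - r * psi m)].

(* the family {psi_i in C_{e_i}(R)} generates C_+(R) = (+)_{e>=1} C_e(R) as
   a right R-module (right action (psi . r)(m) = psi(r m)).  Since C(R) is
   graded and the psi_i are homogeneous, this means: every homogeneous
   phi in C_e(R), e >= 1, is a finite sum  sum_j psi_{i_j} . r_j  with
   e_{i_j} = e. *)
Definition generates_Cplus (I : S -> Prop) (p : nat) (Idx : Type)
    (e : Idx -> nat) (psi : Idx -> S -> S) : Prop :=
  forall (e0 : nat) (phi : S -> S), (0 < e0)%N -> cartier_map I p e0 phi ->
    exists l : seq (Idx * S),
      all (fun ir => e ir.1 == e0) l /\
      forall m, I (phi m - \sum_(ir <- l) psi ir.1 (ir.2 * m)).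

Definition gauge_bounded (I : S -> Prop) (p : nat) : Prop :=
  exists (Idx : Type) (e : Idx -> nat) (psi : Idx -> S -> S) (K : rat),
    [/\ forall i, (0 < e i)%N /\ cartier_map I p (e i) (psi i),
        generates_Cplus I p e psi &
        forall i (r : S) (d : nat), in_Md I d r ->
          delta_le I (psi i r)
            ((d%:R : rat) / (p ^ e i)%:R + K / (p.-1)%:R)].

End StanleyReisner.

From HB Require Import structures.
From mathcomp Require Import all_boot all_algebra.
From mathcomp Require Import finmap mpoly zify.
From Stdlib Require Import ClassicalEpsilon.
Import GRing.Theory Num.Theory.
Set Implicit Arguments.
Unset Strict Implicit.
Unset Printing Implicit Defensive.
Local Open Scope ring_scope.

(* S is free over its subring of p^e-th powers on the monomials x^a with
   a_i < p^e, and the coordinate maps are the Cartier maps [cartier e a]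
   sending x^(p^e w + a) to x^w.  Hence every phi in C_e(R) agrees modulo I
   with sum_a phi(x^a) . cartier e a.  Expanding phi(x^a) = sum_v c_v x^v,
   each term is x^(rad v) . cartier e a (rad v the squarefree part of v)
   precomposed with multiplication by a p^e-th power; since I is generated by
   squarefree monomials and phi(I) is in I, x^(rad v) . cartier e a maps I
   into I.  These generators lower the gauge: the class of
   x^t cartier e a (r) lies in M_(d/p^e + 1) when r lies in M_d, which is the
   bound with K = p - 1. *)

Lemma pnat_pchar_expn (R : nzRingType) p e :
  p \in [pchar R] -> (GRing.pchar R).-nat (p ^ e)%N.
Proof. by move=> hp; rewrite pnatX (pnatE _ (pcharf_prime hp)) hp. Qed.

Lemma expn_pchar_gt0 {R : nzRingType} {p} e : p \in [pchar R] -> (0 < p ^ e)%N.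
Proof. by move=> hp; rewrite expn_gt0 prime_gt0 ?(pcharf_prime hp). Qed.

Section PerfectRoot.
Variables (k : fieldType) (p : nat).
Hypothesis pchar_p : p \in [pchar k].
Hypothesis perfect : forall x : k, exists y : k, y ^+ p = x.

Lemma frob_iter_inj e : injective (fun x : k => x ^+ (p ^ e)).
Proof.
move=> x y /= /eqP; rewrite -subr_eq0 -exprNn_pchar ?pnat_pchar_expn //.
by rewrite -exprDn_pchar ?pnat_pchar_expn // expf_eq0 subr_eq0 => /andP[_ /eqP].
Qed.

Let perfectb (x : k) : exists y, y ^+ p == x.
Proof. by have [y <-] := perfect x; exists y. Qed.

Definition proot e (x : k) : k := iter e (fun y => xchoose (perfectb y)) x.

Lemma prootK e x : proot e x ^+ (p ^ e) = x.
Proof.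
elim: e x => [|e IH] x; first by rewrite expr1.
by rewrite /proot iterS expnS exprM (eqP (xchooseP (perfectb _))) IH.
Qed.

Lemma proot_is_zmod_morphism e : zmod_morphism (proot e).
Proof.
move=> x y; apply: (@frob_iter_inj e).
by rewrite /= exprDn_pchar ?exprNn_pchar ?pnat_pchar_expn // !prootK.
Qed.

HB.instance Definition _ e := GRing.isZmodMorphism.Build k k (proot e)
  (proot_is_zmod_morphism e).

Lemma proot1 e : proot e 1 = 1.
Proof. by apply: (@frob_iter_inj e); rewrite /= prootK expr1n. Qed.

Lemma prootM e c x : proot e (c ^+ (p ^ e) * x) = c * proot e x.
Proof. by apply: (@frob_iter_inj e); rewrite /= !exprMn !prootK. Qed.

End PerfectRoot.

Lemma mcoeffXM (R : comNzRingType) n v (f : {mpoly R[n]}) u :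
  ('X_[v] * f)@_u = if (v <= u)%MM then f@_(u - v)%MM else 0.
Proof.
rewrite -commr_mpolyX; case: ifP => h; first by rewrite -{1}(submK h) addmC mcoeffMX.
apply: memN_msupp_eq0; rewrite (perm_mem (msuppMX _ _)).
by apply/mapP => -[m _ um]; move: h; rewrite um lem_addr.
Qed.

Section MonomialIdeal.
Variables (k : fieldType) (n : nat) (gens : seq 'X_{1..n}).
Local Notation S := {mpoly k[n]}.

(* A generator listed a multiple of char k times contributes nothing to the
   sums in [monomial_ideal], hence the count condition. *)
Definition mideal_mnm (u : 'X_{1..n}) : bool :=
  has (fun g => ((count_mem g gens)%:R != 0 :> k) && (g <= u)%MM) gens.

Definition mideal_supp (f : S) : bool := all mideal_mnm (msupp f).

Lemma mideal_mnm_le u u' : mideal_mnm u -> (u <= u')%MM -> mideal_mnm u'.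
Proof.
move=> /hasP[g gen_g /andP[cnt_g le_gu]] le_uu'; apply/hasP; exists g => //.
by rewrite cnt_g (lepm_trans le_gu le_uu').
Qed.

Lemma mideal_supp0 : mideal_supp 0.
Proof. by rewrite /mideal_supp msupp0. Qed.

Lemma mideal_suppD f g : mideal_supp f -> mideal_supp g -> mideal_supp (f + g).
Proof.
move=> /allP If /allP Ig; apply/allP => u /msuppD_le.
by rewrite mem_cat => /orP[/If|/Ig].
Qed.

Lemma mideal_suppN f : mideal_supp f -> mideal_supp (- f).
Proof. by rewrite /mideal_supp (perm_all _ (msuppN _)). Qed.

Lemma mideal_suppB f g : mideal_supp f -> mideal_supp g -> mideal_supp (f - g).
Proof. by move=> If Ig; apply/mideal_suppD/mideal_suppN. Qed.

Lemma mideal_supp_sum (I : Type) (s : seq I) (P : pred I) (F : I -> S) :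
  (forall i, P i -> mideal_supp (F i)) -> mideal_supp (\sum_(i <- s | P i) F i).
Proof.
move=> IF; apply: (big_ind mideal_supp) => //.
  exact: mideal_supp0.
exact: mideal_suppD.
Qed.

Lemma mideal_suppX u : mideal_mnm u -> mideal_supp 'X_[u].
Proof. by rewrite /mideal_supp msuppX /= andbT. Qed.

Lemma monomial_ideal0 : monomial_ideal gens (0 : S).
Proof. by exists (fun=> 0); rewrite big1 // => m _; rewrite mul0r. Qed.

Lemma monomial_idealD (f g : S) :
  monomial_ideal gens f -> monomial_ideal gens g -> monomial_ideal gens (f + g).
Proof.
move=> [c ->] [c' ->]; exists (fun m => c m + c' m).
by rewrite -big_split; apply: eq_bigr => m _; rewrite mulrDl.
Qed.

Lemma monomial_idealZX (c : k) u : mideal_mnm u -> monomial_ideal gens (c *: 'X_[u]).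
Proof.
move=> /hasP[g _ /andP[cnt_g le_gu]]; set N := (count_mem g gens)%:R : k.
exists (fun m => (m == g)%:R * (N^-1 *: (c *: 'X_[(u - g)%MM]))).
rewrite (eq_bigr (fun m => if m == g then N^-1 *: (c *: 'X_[(u - g)%MM]) * 'X_[g]
  else 0)) => [|m _]; last by have [->|] := eqVneq m g; rewrite ?mul1r ?mul0r.
rewrite -big_mkcond (eq_bigl (pred1 g)) // big_const_seq /= iter_addr_0.
by rewrite -scaler_nat -scalerAl scalerA -/N mulfV // scale1r -scalerAl -mpolyXD submK.
Qed.

Definition mnm_rad (v : 'X_{1..n}) : 'X_{1..n} := [multinom minn (v i) 1 | i < n].

Lemma mnm_rad_le v : (mnm_rad v <= v)%MM.
Proof. by apply/mnm_lepP => i; rewrite mnmE geq_minl. Qed.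

Lemma mnm_rad_le1 v i : (mnm_rad v i <= 1)%N.
Proof. by rewrite mnmE geq_minr. Qed.

Lemma mideal_mnm_radD v w : all (@squarefree_monom n) gens ->
  mideal_mnm (mnm_rad v + w)%MM = mideal_mnm (v + w)%MM.
Proof.
move=> /allP sqf; apply: eq_in_has => g /sqf /forallP sqf_g /=; congr (_ && _).
by apply/mnm_lepP/mnm_lepP => le_g i; have := le_g i; have := sqf_g i;
  rewrite !mnmDE mnmE; lia.
Qed.

Lemma monomial_idealP (f : S) : monomial_ideal gens f <-> mideal_supp f.
Proof.
split=> [[c ->]|/allP If]; last first.
  rewrite [f]mpolyE big_seq; apply: (big_ind (monomial_ideal gens)) => [|g g'|u /If Iu].
  - exact: monomial_ideal0.
  - exact: monomial_idealD.
  - exact: monomial_idealZX.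
apply/allP => u; rewrite mcoeff_msupp; apply: contraNT => not_Iu.
rewrite raddf_sum /= -big_undup_iterop_count; apply/eqP.
rewrite big1_seq // => m /andP[_ gen_m].
rewrite Monoid.iteropE iter_addr_0 -mulr_natr commr_mpolyX mcoeffXM.
have [cnt_m|] := eqVneq ((count_mem m gens)%:R : k) 0; first by rewrite cnt_m mulr0.
case: ifP => [le_mu cnt_m|_]; last by rewrite mul0r.
case/negP: not_Iu; apply/hasP; exists m; first by rewrite -mem_undup.
by rewrite cnt_m.
Qed.

End MonomialIdeal.

Section CartierPoly.
Variables (k : fieldType) (n p : nat).
Hypothesis pchar_p : p \in [pchar k].
Hypothesis perfect : forall x : k, exists y : k, y ^+ p = x.
Local Notation S := {mpoly k[n]}.
Local Notation q_gt0 e := (expn_pchar_gt0 e pchar_p).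

Lemma pchar_mpoly : p \in [pchar S]. Proof. by rewrite pchar_lalg. Qed.

Definition cartier e (a : 'X_{1..n}) (f : S) : S :=
  \sum_(w : 'X_{1..n < msize f}) proot perfect e f@_(w *+ p ^ e + a)%MM *: 'X_[w].

Lemma mcoeff_cartier e a f w :
  (cartier e a f)@_w = proot perfect e f@_(w *+ p ^ e + a)%MM.
Proof.
have [lt_wf|le_fw] := ltnP (mdeg w) (msize f).
  exact: (mcoeff_mpoly (fun w => proot perfect e f@_(w *+ p ^ e + a)%MM)).
rewrite raddf_sum big1 => [|[w' lt_w'] _]; last first.
  rewrite /= mcoeffZ mcoeffX; case: eqP => [eww|]; last by rewrite mulr0.
  by move: (leq_trans lt_w' le_fw); rewrite /= eww ltnn.
rewrite memN_msupp_eq0 ?raddf0 //; apply/negP => /msize_mdeg_lt.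
rewrite mdegD mdegMn; have := q_gt0 e; move: (p ^ e)%N => q; nia.
Qed.

Lemma cartier_is_zmod_morphism e a : zmod_morphism (cartier e a).
Proof.
by move=> f g; apply/mpolyP => w; rewrite mcoeffB !mcoeff_cartier mcoeffB raddfB.
Qed.

HB.instance Definition _ e a := GRing.isZmodMorphism.Build S S (cartier e a)
  (cartier_is_zmod_morphism e a).

Lemma cartier_frobXM e (a : 'X_{1..n}) c u (m : S) : (forall i, a i < p ^ e)%N ->
  cartier e a ((c *: 'X_[u]) ^+ (p ^ e) * m) = c *: 'X_[u] * cartier e a m.
Proof.
move=> lt_a; apply/mpolyP => w.
rewrite exprZn mpolyXn -!scalerAl !mcoeffZ mcoeff_cartier mcoeffZ !mcoeffXM.
have -> : (u *+ p ^ e <= w *+ p ^ e + a)%MM = (u <= w)%MM.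
  by apply/mnm_lepP/mnm_lepP => le_uw i; have := le_uw i; have := lt_a i;
    rewrite ?mnmDE ?mulmnE; move: (p ^ e)%N => q; nia.
case: ifP => [/mnm_lepP le_uw|_]; rewrite prootM ?raddf0 // mcoeff_cartier.
congr (_ * proot perfect e m@_ _); apply/mnmP => i; have := le_uw i.
by rewrite !(mnmBE, mnmDE, mulmnE); move: (p ^ e)%N => q; nia.
Qed.

Lemma cartier_frobM e (a : 'X_{1..n}) (r m : S) : (forall i, a i < p ^ e)%N ->
  cartier e a (r ^+ (p ^ e) * m) = r * cartier e a m.
Proof.
move=> lt_a; elim/mpolyind: r => [|c u r _ _ IH].
  by rewrite expr0n eqn0Ngt (q_gt0 e) !mul0r raddf0.
rewrite exprDn_pchar ?pnat_pchar_expn ?pchar_mpoly //.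
by rewrite !mulrDl raddfD /= IH cartier_frobXM.
Qed.

Local Notation mnm_lt e := {ffun 'I_n -> 'I_(p ^ e)}.

Definition mnm_of e (a : mnm_lt e) : 'X_{1..n} := [multinom (a i : nat) | i < n].
Definition mnm_divp e (u : 'X_{1..n}) : 'X_{1..n} := [multinom (u i %/ p ^ e)%N | i < n].
Definition mnm_modp e (u : 'X_{1..n}) : mnm_lt e :=
  [ffun i => Ordinal (ltn_pmod (u i) (q_gt0 e))].

Lemma mnm_of_lt e (a : mnm_lt e) i : (mnm_of a i < p ^ e)%N.
Proof. by rewrite mnmE. Qed.

Lemma mnm_divp_modp e u : u = (mnm_divp e u *+ p ^ e + mnm_of (mnm_modp e u))%MM.
Proof. by apply/mnmP => i; rewrite mnmDE mulmnE !mnmE ffunE [LHS](divn_eq _ (p ^ e)). Qed.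

Lemma eq_mnm_divp_modp e u w (a : mnm_lt e) :
  (u == w *+ p ^ e + mnm_of a)%MM = (w == mnm_divp e u) && (a == mnm_modp e u).
Proof.
apply/eqP/andP => [->|[/eqP -> /eqP ->]]; last exact: mnm_divp_modp.
split; apply/eqP.
  apply/mnmP => i; rewrite !mnmE mulmnE divnMDl ?(q_gt0 e) //.
  by rewrite divn_small ?addn0.
apply/ffunP => i; apply/val_inj; rewrite ffunE /= mnmDE mulmnE mnmE.
by rewrite modnMDl modn_small.
Qed.

Lemma cartierZX e (a : mnm_lt e) c u :
  cartier e (mnm_of a) (c *: 'X_[u]) =
    if a == mnm_modp e u then proot perfect e c *: 'X_[mnm_divp e u] else 0.
Proof.
apply/mpolyP => w; rewrite mcoeff_cartier mcoeffZ mcoeffX eq_mnm_divp_modp.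
case: (a == mnm_modp e u); last by rewrite andbF mulr0 !raddf0.
rewrite andbT mcoeffZ mcoeffX eq_sym.
by case: eqP; rewrite ?mulr1 ?mulr0 ?raddf0.
Qed.

Lemma cartierX e (a : mnm_lt e) u :
  cartier e (mnm_of a) 'X_[u] = if a == mnm_modp e u then 'X_[mnm_divp e u] else 0.
Proof.
have := cartierZX a 1 u; rewrite [X in cartier _ _ X]scale1r (proot1 pchar_p) => ->.
by case: (a == mnm_modp e u); rewrite ?scale1r.
Qed.

Lemma frob_decomp e (m : S) :
  m = \sum_(a : mnm_lt e) cartier e (mnm_of a) m ^+ (p ^ e) * 'X_[mnm_of a].
Proof.
have frob0 : 0 ^+ (p ^ e) = 0 :> S by rewrite expr0n eqn0Ngt (q_gt0 e).
elim/mpolyind: m => [|c u m _ _ IH].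
  by rewrite big1 // => a _; rewrite raddf0 frob0 mul0r.
under eq_bigr => a _ do
  rewrite raddfD exprDn_pchar ?pnat_pchar_expn ?pchar_mpoly // mulrDl.
rewrite big_split /= -IH (bigD1 (mnm_modp e u)) //= big1 => [|a /negPf ne_a].
  rewrite cartierZX eqxx exprZn prootK mpolyXn -scalerAl -mpolyXD.
  by rewrite -mnm_divp_modp addr0.
by rewrite cartierZX ne_a frob0 mul0r.
Qed.

Variable gens : seq 'X_{1..n}.
Local Notation I := (monomial_ideal gens).

Section CartierMap.
Variables (e : nat) (phi : S -> S).
Hypothesis phi_cartier : cartier_map I p e phi.

Lemma cartier_map_ideal f g :
  mideal_supp gens (f - g) -> mideal_supp gens (phi f - phi g).
Proof. by case: phi_cartier => phi_wd _ _ /monomial_idealP/phi_wd/monomial_idealP. Qed.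

Lemma cartier_mapD f g : mideal_supp gens (phi (f + g) - (phi f + phi g)).
Proof. by case: phi_cartier => _ phiD _; apply/monomial_idealP/phiD. Qed.

Lemma cartier_mapM r m : mideal_supp gens (phi (r ^+ (p ^ e) * m) - r * phi m).
Proof. by case: phi_cartier => _ _ phiM; apply/monomial_idealP/phiM. Qed.

Lemma cartier_map0 : mideal_supp gens (phi 0).
Proof.
have := cartier_mapD 0 0; rewrite addr0 opprD addrA subrr add0r.
by move=> /mideal_suppN; rewrite opprK.
Qed.

Lemma cartier_map_sum (J : Type) (s : seq J) (F : J -> S) :
  mideal_supp gens (phi (\sum_(j <- s) F j) - \sum_(j <- s) phi (F j)).
Proof.
elim: s => [|j s IH]; first by rewrite !big_nil subr0 cartier_map0.
rewrite !big_cons; set A := phi (F j + _); set D := phi (\sum_(i <- s) F i).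
have -> : A - (phi (F j) + \sum_(i <- s) phi (F i)) =
    (A - (phi (F j) + D)) + (D - \sum_(i <- s) phi (F i)).
  by rewrite !opprD !addrA addrNK.
by rewrite mideal_suppD ?cartier_mapD.
Qed.

Definition cartier_expand (m : S) : S :=
  \sum_(a : mnm_lt e) phi 'X_[mnm_of a] * cartier e (mnm_of a) m.

Lemma cartier_map_expand m : mideal_supp gens (phi m - cartier_expand m).
Proof.
rewrite {1}(frob_decomp e m) -[X in X - _](subrK
  (\sum_(a : mnm_lt e) phi (cartier e (mnm_of a) m ^+ (p ^ e) * 'X_[mnm_of a]))).
rewrite -addrA; apply: mideal_suppD; first exact: cartier_map_sum.
rewrite /cartier_expand -sumrB; apply: mideal_supp_sum => a _.
by rewrite [phi _ * _]mulrC cartier_mapM.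
Qed.

Lemma cartier_expandX u :
  cartier_expand 'X_[u] = phi 'X_[mnm_of (mnm_modp e u)] * 'X_[mnm_divp e u].
Proof.
rewrite /cartier_expand (bigD1 (mnm_modp e u)) //= big1 => [|a /negPf ne_a].
  by rewrite cartierX eqxx addr0.
by rewrite cartierX ne_a mulr0.
Qed.

(* Applying phi to x^u for x^u in I, with u = p^e w + a, shows that
   phi(x^a) x^w lies in I. *)
Lemma mideal_mnm_cartier_supp (a : mnm_lt e) v w :
  v \in msupp (phi 'X_[mnm_of a]) -> mideal_mnm k gens (w *+ p ^ e + mnm_of a)%MM ->
  mideal_mnm k gens (v + w)%MM.
Proof.
move=> supp_v; set u := (w *+ _ + _)%MM => Iu.
have I_phiXu : mideal_supp gens (phi 'X_[u]).
  rewrite -(subrK (phi 0) (phi _)) mideal_suppD ?cartier_map0 //.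
  by rewrite cartier_map_ideal // subr0 mideal_suppX.
have := mideal_suppB I_phiXu (cartier_map_expand 'X_[u]).
rewrite subKr cartier_expandX.
have /andP[/eqP <- /eqP <-] : (w == mnm_divp e u) && (a == mnm_modp e u).
  by rewrite -eq_mnm_divp_modp.
move=> /allP; apply.
by rewrite (perm_mem (msuppMX _ _)) addmC; apply/mapP; exists v.
Qed.

Lemma radX_cartier_mideal (a : mnm_lt e) v g :
  all (@squarefree_monom n) gens -> v \in msupp (phi 'X_[mnm_of a]) ->
  mideal_supp gens g -> mideal_supp gens ('X_[mnm_rad v] * cartier e (mnm_of a) g).
Proof.
move=> sqf supp_v /allP Ig; apply/allP => u.
rewrite -commr_mpolyX (perm_mem (msuppMX _ _)) => /mapP[w supp_w ->].
rewrite mideal_mnm_radD //; apply: (mideal_mnm_cartier_supp supp_v); apply: Ig.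
move: supp_w; rewrite !mcoeff_msupp mcoeff_cartier.
by apply: contra => /eqP->; rewrite raddf0.
Qed.

End CartierMap.

Lemma in_Sd_cartier e a d (g : S) : in_Sd d g -> in_Sd (d %/ p ^ e) (cartier e a g).
Proof.
move=> Sg m; rewrite mcoeff_msupp mcoeff_cartier => nz_m j.
have /Sg/(_ j) : (m *+ p ^ e + a)%MM \in msupp g.
  by rewrite mcoeff_msupp; apply: contraNneq nz_m => ->; rewrite raddf0.
rewrite mnmDE mulmnE leq_divRL ?(q_gt0 e) //; exact/leq_trans/leq_addr.
Qed.

Lemma in_SdXM (t : 'X_{1..n}) d (g : S) :
  (forall j, t j <= 1)%N -> in_Sd d g -> in_Sd d.+1 ('X_[t] * g).
Proof.
move=> t_le1 Sg u; rewrite -commr_mpolyX (perm_mem (msuppMX _ _)).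
by move=> /mapP[m /Sg Sm ->] j; rewrite mnmDE -addn1 addnC leq_add.
Qed.

Definition gen_index := (nat * 'X_{1..n} * 'X_{1..n})%type.

Definition gen_exp (i : gen_index) : nat := i.1.1.+1.

Definition gen_ok (i : gen_index) : Prop :=
  [/\ forall j, (i.1.2 j < p ^ gen_exp i)%N, forall j, (i.2 j <= 1)%N &
      forall g, mideal_supp gens g ->
        mideal_supp gens ('X_[i.2] * cartier (gen_exp i) i.1.2 g)].

(* The index (e', a, t) stands for x^t . cartier (e'.+1) a; indices for which
   this map does not descend to R are sent to 0. *)
Definition gen_map (i : gen_index) : S -> S :=
  if excluded_middle_informative (gen_ok i)
  then fun g => 'X_[i.2] * cartier (gen_exp i) i.1.2 g else fun=> 0.

Lemma gen_map_cartier i : cartier_map I p (gen_exp i) (gen_map i).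
Proof.
rewrite /gen_map; case: excluded_middle_informative => [[lt_a _ Ipres]|_] /=;
  split=> [f g /monomial_idealP Ifg|f g|r m]; apply/monomial_idealP.
- by rewrite -mulrBr -raddfB Ipres.
- by rewrite raddfD mulrDr subrr mideal_supp0.
- by rewrite cartier_frobM // mulrCA subrr mideal_supp0.
- by rewrite subrr mideal_supp0.
- by rewrite addr0 subrr mideal_supp0.
- by rewrite mulr0 subrr mideal_supp0.
Qed.

Lemma gen_map_gauge i d r : in_Md I d r ->
  delta_le I (gen_map i r) (d%:R / (p ^ gen_exp i)%:R + 1).
Proof.
move=> [g [Sg Irg]]; rewrite /gen_map.
case: excluded_middle_informative => [[_ t_le1 Ipres]|_] /=; last first.
  by left; exact: monomial_ideal0.
right; exists (d %/ p ^ gen_exp i).+1; split.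
  rewrite -addn1 natrD lerD2r ler_pdivlMr ?ltr0n ?(q_gt0 (gen_exp i)) //.
  by rewrite -natrM ler_nat leq_trunc_div.
exists ('X_[i.2] * cartier (gen_exp i) i.1.2 g); split.
  exact/in_SdXM/in_Sd_cartier.
by apply/monomial_idealP; rewrite -mulrBr -raddfB Ipres //; apply/monomial_idealP.
Qed.

(* Writing phi(x^a) = sum_v c_v x^v, the summand c_v x^v . cartier a is
   x^(rad v) . cartier a precomposed with multiplication by
   (c_v x^(v - rad v))^(p^e). *)
Definition gen_list e (phi : S -> S) : seq (gen_index * S) :=
  flatten [seq [seq ((e, mnm_of a, mnm_rad v),
                     ((phi 'X_[mnm_of a])@_v *: 'X_[(v - mnm_rad v)%MM]) ^+ (p ^ e.+1))
               | v <- msupp (phi 'X_[mnm_of a])]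
          | a <- index_enum (mnm_lt e.+1)].

Lemma gen_list_expand e phi m :
  all (@squarefree_monom n) gens -> cartier_map I p e.+1 phi ->
  \sum_(ir <- gen_list e phi) gen_map ir.1 (ir.2 * m) = cartier_expand e.+1 phi m.
Proof.
move=> sqf phi_cartier; rewrite big_flatten big_map; apply: eq_bigr => a _.
rewrite big_map [in RHS](mpolyE (phi 'X_[mnm_of a])) mulr_suml.
apply: eq_big_seq => v supp_v; rewrite /gen_map.
case: excluded_middle_informative => [_|not_ok] /=; rewrite /gen_exp /=; last first.
  case: not_ok; split=> [j|j|g]; rewrite /gen_exp /=; [exact: mnm_of_lt|
    exact: mnm_rad_le1|exact: @radX_cartier_mideal _ _ phi_cartier _ _ g sqf supp_v].
rewrite cartier_frobM; last exact: mnm_of_lt.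
by rewrite mulrA -scalerAr -mpolyXD addmC submK ?mnm_rad_le.
Qed.

Lemma gen_map_generates :
  all (@squarefree_monom n) gens -> generates_Cplus I p gen_exp gen_map.
Proof.
move=> sqf [//|e] phi _ phi_cartier; exists (gen_list e phi); split.
  by apply/allP => ir /flattenP[_ /mapP[a _ ->] /mapP[v _ ->]].
move=> m; apply/monomial_idealP.
by rewrite gen_list_expand // cartier_map_expand.
Qed.

End CartierPoly.

Theorem proposition5p3 (k : fieldType) (p n : nat) (gens : seq 'X_{1..n}) :
  p \in [pchar k] ->
  (forall x : k, exists y : k, y ^+ p = x) ->
  all (@squarefree_monom n) gens ->
  gauge_bounded (@monomial_ideal k n gens) p.
Proof.
move=> pchar_p perfect sqf.
have p1_neq0 : (p.-1)%:R != 0 :> rat.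
  by rewrite pnatr_eq0; have := prime_gt1 (pcharf_prime pchar_p); lia.
exists _, (@gen_exp n), (gen_map perfect gens), (p.-1)%:R; split.
- by move=> i; split; last exact: gen_map_cartier.
- exact: gen_map_generates.
- by move=> i r d /(gen_map_gauge pchar_p perfect); rewrite divff.
Qed.
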